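(* Let $(X,T)$ be a topological dynamical system, $f\in C(X,\mathbb{R})$, and $(K_n)_{n\ge1}$ a sequence of nonempty closed subsets of $X$. Then $$\lim_{\delta\to0}\limsup_{n\to+\infty}\frac1n\log P_n(T,f,\delta,K_n)=\sup_{\mathcal{U}\in\mathcal{C}_X^o}\limsup_{n\to+\infty}\frac1n\log P_n(T,f,\mathcal{U},K_n).$$
   Context: A TDS is a compact metric space $(X,d)$ with a homeomorphism $T$. $f_n=\sum_{i=0}^{n-1}f\circ T^i$, $d_n(x,y)=\max_{0\le i<n}d(T^ix,T^iy)$, and $P_n(T,f,\delta,K)=\sup\{\sum_{x\in E}\exp f_n(x): E\subseteq K,\ d_n(x,y)>\delta\text{ for distinct }x,y\in E\}$. $\mathcal{C}_X$ is the set of finite Borel covers of $X$, $\mathcal{C}_X^o$ the set of finite open covers; $\mathcal{V}\succeq\mathcal{U}$ means each element of $\mathcal{V}$ lies in some element of $\mathcal{U}$; $\mathcal{U}_0^{n-1}=\bigvee_{i=0}^{n-1}T^{-i}\mathcal{U}$. $P_n(T,f,\mathcal{U},K)=\inf\{\sum_{V\in\mathcal{V}}\sup_{x\in V\cap K}\exp f_n(x):\mathcal{V}\in\mathcal{C}_X,\ \mathcal{V}\succeq\mathcal{U}_0^{n-1}\}$, terms with $V\cap K=\emptyset$ contributing $0$. *)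

From HB Require Import structures.
From mathcomp Require Import all_boot all_order all_algebra.
From mathcomp Require Import all_classical all_reals all_analysis.
Set Implicit Arguments. Unset Strict Implicit. Unset Printing Implicit Defensive.
Import Order.TTheory GRing.Theory Num.Theory.
Import numFieldNormedType.Exports.
Local Open Scope classical_set_scope.
Local Open Scope ring_scope.

Section Pressure.
Context {R : realType} {X : metricType R}.

Definition birk (T : X -> X) (f : X -> R) (n : nat) (x : X) : R :=
  \sum_(i < n) f (iter i T x).

Definition bowen_dist (T : X -> X) (n : nat) (x y : X) : R :=
  \big[Order.max/0]_(i < n) mdist (iter i T x) (iter i T y).

Definition separated_set (T : X -> X) (n : nat) (delta : R) (E : set X) :=
  forall x y, E x -> E y -> x <> y -> delta < bowen_dist T n x y.

Definition pressure_sep (T : X -> X) (f : X -> R) (n : nat) (delta : R)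
    (K : set X) : \bar R :=
  ereal_sup [set (\sum_(x \in E) (expR (birk T f n x))%:E)%E
            | E in [set E | finite_set E /\ E `<=` K /\ separated_set T n delta E]].

Definition borel_set (A : set X) : Prop := (<<s [set B | open B] >>) A.

Definition borel_cover (V : set (set X)) : Prop :=
  finite_set V /\ (forall A, V A -> borel_set A) /\ \bigcup_(A in V) A = setT.

Definition open_cover (U : set (set X)) : Prop :=
  finite_set U /\ (forall A, U A -> open A) /\ \bigcup_(A in U) A = setT.

Definition refines (V U : set (set X)) : Prop :=
  forall A, V A -> exists2 B, U B & A `<=` B.

Definition join_cover (T : X -> X) (U : set (set X)) (n : nat) : set (set X) :=
  [set W | exists g : nat -> set X, (forall i, (i < n)%N -> U (g i)) /\
           W = \bigcap_(i in [set i | (i < n)%N]) (iter i T @^-1` g i)].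

Definition cover_term (T : X -> X) (f : X -> R) (n : nat) (K V : set X) : \bar R :=
  if pselect (V `&` K = set0) then 0%E
  else ereal_sup [set (expR (birk T f n x))%:E | x in V `&` K].

Definition pressure_cov (T : X -> X) (f : X -> R) (n : nat) (U : set (set X))
    (K : set X) : \bar R :=
  ereal_inf [set (\sum_(A \in V) cover_term T f n K A)%E
            | V in [set V | borel_cover V /\ refines V (join_cover T U n)]].

End Pressure.

Definition elog {R : realType} (x : \bar R) : \bar R :=
  match x with
  | EFin r => if (0 < r)%R then (ln r)%:E else -oo%E
  | +oo%E => +oo%E
  | -oo%E => -oo%E
  end.

Definition homeomorphism {R : realType} {X : metricType R} (T : X -> X) : Prop :=
  continuous T /\ exists2 S : X -> X, continuous S & cancel T S /\ cancel S T.

(* If every element of an open cover U has d-diameter less than delta, every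
   element of a Borel refinement of U_0^{n-1} meets a delta-separated set for
   d_n at most once, so P_n(T,f,delta,K) <= P_n(T,f,U,K).  Conversely, let 2r
   be below a Lebesgue number of U and below the modulus of uniform continuity
   of f for oscillation e.  The Bowen 2r-balls around a maximal r-separated
   subset E of K cover K, each lies in an element of U_0^{n-1}, and f_n varies
   by at most n e on each of them, so P_n(T,f,U,K) <= exp(n e) P_n(T,f,r,K).
   After taking (1/n) log and limsup, the first inequality bounds the limit
   from above and the second from below up to e. *)

From HB Require Import structures.
From mathcomp Require Import all_boot all_order all_algebra.
From mathcomp Require Import all_classical all_reals all_analysis.
From mathcomp Require Import finmap.
From mathcomp Require Import lra.
Import Order.TTheory GRing.Theory Num.Theory.
Import numFieldNormedType.Exports.
Local Open Scope classical_set_scope.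
Local Open Scope ring_scope.

Section compact_metric.
Context {R : realType} {X : metricType R}.
Implicit Types (x y z : X) (r : R).

Lemma mball_open x r : open [set y | mdist x y < r].
Proof.
rewrite openE => y /= xy; apply/nbhs_ballP; exists (r - mdist x y) => /=.
  by rewrite subr_gt0.
move=> w; rewrite ballEmdist /= => yw.
by rewrite (le_lt_trans (metric_triangle x y w))// -ltrBrDl.
Qed.

Hypothesis compactX : compact [set: X].

Lemma compact_finite_subcover (O : X -> set X) :
  (forall x, open (O x)) -> (forall x, O x x) ->
  exists Z : {fset X}, forall y, exists2 z, z \in Z & O z y.
Proof.
move=> Oopen Ox.
pose F := filter_from [set: {fset X}] (fun A => [set B | (A `<=` B)%fset]).
have FF : Filter F.
  apply: filter_from_filter; first by exists fset0%fset.
  move=> A B _ _; exists (A `|` B)%fset => // C /= ABC.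
  by split; apply: fsubset_trans ABC; [exact: fsubsetUl|exact: fsubsetUr].
have /compact_near_coveringP cover := compactX.
have [|A _ AZ] := cover _ F (fun Z y => exists2 z, z \in Z & O z y) FF.
  move=> x _; exists (O x, [set B | ([fset x] `<=` B)%fset]).
    by split => /=; [apply: open_nbhs_nbhs|exists [fset x]%fset].
  case=> y B [/= Oxy /fsubsetP xB]; exists x => //.
  by apply: xB; rewrite inE.
by exists A => y; exact: AZ (fsubset_refl A) y I.
Qed.

Lemma compact_uniform_radius (e : X -> R) : (forall x, 0 < e x) ->
  exists2 r, 0 < r & forall y, exists z, mdist z y < e z /\ r <= e z.
Proof.
move=> e_gt0.
have [Z cover] := compact_finite_subcover (fun z => [set y | mdist z y < e z])
  (fun z => mball_open z (e z)) (fun z => ltac:(by rewrite /= mdistxx)).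
exists (\big[Order.min/1]_(z <- Z) e z).
  by elim/big_ind: _ => // a b a0 b0; rewrite lt_min a0 b0.
move=> y; have [z zZ zy] := cover y; exists z; split => //.
exact: ge_bigmin_seq.
Qed.

Lemma lebesgue_number (U : set (set X)) :
  (forall A, U A -> open A) -> \bigcup_(A in U) A = setT ->
  exists2 r, 0 < r & forall x, exists2 A, U A & [set y | mdist x y < r] `<=` A.
Proof.
move=> Uopen Ucover.
have /choice [e He] : forall x, exists e, 0 < e /\
    exists2 A, U A & [set y | mdist x y < e] `<=` A.
  move=> x; have : setT x by [].
  rewrite -Ucover => -[A UA Ax].
  have := Uopen A UA; rewrite openE => /(_ x Ax) /nbhs_ballP [e e_gt0 eA].
  by exists e; split => //; exists A => // y xy; apply: eA; rewrite ballEmdist.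
have [r r_gt0 Hr] := compact_uniform_radius (fun x => e x / 2)
  (fun x => divr_gt0 (He x).1 (ltr0Sn _ 1)).
exists r => // x; have [z [zx rz]] := Hr x; have [e_gt0 [A UA zA]] := He z.
exists A => // y /= xy; apply: zA => /=.
rewrite (le_lt_trans (metric_triangle z x y))// [e z]splitr ltrD//.
exact: lt_le_trans xy rz.
Qed.

Lemma compact_unif_continuous (f : X -> R) : continuous f ->
  forall eps, 0 < eps -> exists2 eta, 0 < eta &
    forall a b, mdist a b < eta -> `|f a - f b| < eps.
Proof.
move=> fcont eps eps_gt0.
pose U := [set f @^-1` ball (f x) (eps / 2) | x in [set: X]].
have [||eta eta_gt0 Heta] := lebesgue_number U.
- move=> _ [x _ <-]; apply: open_comp; last exact: ball_open.
  by move=> y _; exact: fcont.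
- apply/seteqP; split => // x _; exists (f @^-1` ball (f x) (eps / 2)).
    by exists x.
  by apply: ballxx; rewrite divr_gt0.
exists eta => // a b ab; have [_ [x _ <-] xA] := Heta a.
have /= := xA a; rewrite mdistxx => /(_ eta_gt0); rewrite -ball_normE /= => xa.
have /= := xA b ab; rewrite -ball_normE /= => xb.
by rewrite (le_lt_trans (ler_distD (f x) _ _))// [eps]splitr distrC ltrD.
Qed.

Lemma small_open_cover d : 0 < d ->
  exists2 U : set (set X), open_cover U &
    forall A, U A -> forall x y, A x -> A y -> mdist x y < d.
Proof.
move=> d_gt0; pose O z := [set y | mdist z y < d / 2].
have [Z ZX] := compact_finite_subcover O (fun z => mball_open z (d / 2))
  (fun z => ltac:(by rewrite /O /= mdistxx divr_gt0)).
exists (O @` [set` Z]).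
  split; first exact/finite_image/finite_fset.
  split; first by move=> _ [z _ <-]; exact: mball_open.
  apply/seteqP; split => // y _; have [z zZ zy] := ZX y.
  by exists (O z) => //; exists z.
move=> _ [z _ <-] x y zx zy.
by rewrite (le_lt_trans (metric_triangle x z y))// metric_sym [d]splitr ltrD.
Qed.

End compact_metric.

Lemma borel_open {R : realType} {X : metricType R} (A : set X) :
  open A -> borel_set A.
Proof. exact: sub_sigma_algebra. Qed.

Lemma borel_setD {R : realType} {X : metricType R} (A B : set X) :
  borel_set A -> borel_set B -> borel_set (A `\` B).
Proof.
have borelC C : borel_set C -> borel_set (~` C).
  by move=> ?; rewrite -setTD; exact: sigma_algebraCD.
move=> bA bB; rewrite -[A `\` B]setCK setDE setCI setCK.
suff : borel_set (~` A `|` B) by exact: borelC.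
rewrite -bigcup2E; apply: sigma_algebra_bigcup => -[|[|i]] //=.
  exact: borelC.
exact: sigma_algebra0.
Qed.

Lemma fsume_image_le {R : realType} {I J : choiceType} (h : I -> J)
    (F : J -> \bar R) (S : set I) :
  finite_set S -> (forall j, 0 <= F j)%E ->
  (\sum_(j \in h @` S) F j <= \sum_(i \in S) F (h i))%E.
Proof.
move=> Sfin F_ge0; have [->|/set0P [i0 Si0]] := eqVneq S set0.
  by rewrite image_set0 !fsbig_set0.
have /choice [g Hg] : forall j, exists i, (h @` S) j -> S i /\ h i = j.
  move=> j; have [[i Si <-]|nSj] := pselect ((h @` S) j).
    by exists i.
  by exists i0.
have g_inj : set_inj (h @` S) g.
  move=> j j' /set_mem /Hg [_ hj] /set_mem /Hg [_ hj'] gjj'.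
  by rewrite -hj -hj' gjj'.
rewrite (eq_fsbigr (fun j => F (h (g j)))); last first.
  by move=> j /set_mem /Hg [_ ->].
rewrite -(fsbig_image _ _ (fun i => F (h i)) g_inj).
apply: lee_fsum_nneg_subset => //; first exact/finite_image/finite_image.
by move=> _ /set_mem [_ [i Si <-] <-]; apply/mem_set; exact: (Hg (h i) _).1.
Qed.

Section bowen.
Context {R : realType} {X : metricType R} (T : X -> X).
Implicit Types (x y z c w : X) (r : R) (n : nat).

Definition bowen_ball n c r :=
  [set w | forall i, (i < n)%N -> mdist (iter i T c) (iter i T w) < r].

Lemma bowen_ballxx n c r : 0 < r -> bowen_ball n c r c.
Proof. by move=> r_gt0 i _; rewrite mdistxx. Qed.

Lemma iter_continuous : continuous T -> forall i, continuous (iter i T).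
Proof.
move=> cT; elim=> [|i IHi] /= x; first exact: cvg_id.
by apply: continuous_comp; [exact: IHi|exact: cT].
Qed.

Lemma bowen_ball_open n c r : continuous T -> open (bowen_ball n c r).
Proof.
move=> cT; rewrite openE => w wB.
have : \forall w' \near w,
    forall i : 'I_n, mdist (iter i T c) (iter i T w') < r.
  apply: filter_forall => i.
  apply: (iter_continuous cT i w [set y | mdist (iter i T c) y < r]).
  by apply: open_nbhs_nbhs; split; [exact: mball_open|exact: wB].
by apply: filterS => w' Hw' i lt_in; exact: (Hw' (Ordinal lt_in)).
Qed.

Lemma bowen_ball_sub_join (U : set (set X)) n c r :
  (forall x, exists2 A, U A & [set y | mdist x y < r] `<=` A) ->
  exists2 W, join_cover T U n W & bowen_ball n c r `<=` W.
Proof.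
move=> Ur; have /choice [g Hg] : forall i, exists A, U A /\
    [set y | mdist (iter i T c) y < r] `<=` A.
  by move=> i; have [A UA cA] := Ur (iter i T c); exists A.
exists (\bigcap_(i in [set i | (i < n)%N]) (iter i T @^-1` g i)).
  by exists g; split => // i _; exact: (Hg i).1.
by move=> w cw i /= lt_in; apply: (Hg i).2; exact: cw.
Qed.

Lemma bowen_dist_lt n x y r : 0 < r ->
  (forall i, (i < n)%N -> mdist (iter i T x) (iter i T y) < r) ->
  bowen_dist T n x y < r.
Proof. by move=> r_gt0 xy; apply: bigmax_lt => // i _; exact: xy. Qed.

Lemma le_bowen_dist n x y i : (i < n)%N ->
  mdist (iter i T x) (iter i T y) <= bowen_dist T n x y.
Proof.
move=> lt_in.
exact: (le_bigmax _ (fun j : 'I_n => mdist (iter j T x) (iter j T y))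
  (Ordinal lt_in)).
Qed.

Lemma bowen_distC n x y : bowen_dist T n x y = bowen_dist T n y x.
Proof. by apply: eq_bigr => i _; rewrite metric_sym. Qed.

Lemma separated_subseq n r (s : seq X) : 0 <= r -> exists E : seq X,
  [/\ {subset E <= s}, separated_set T n r [set` E] &
    forall y, y \in s -> exists2 x, x \in E & bowen_dist T n x y <= r].
Proof.
move=> r_ge0; elim: s => [|a s [E [sE sepE coverE]]]; first by exists [::].
have [[x xE xa]|farE] := pselect (exists2 x, x \in E & bowen_dist T n x a <= r).
  exists E; split => // [y /sE ys|y]; first by rewrite inE ys orbT.
  by rewrite inE => /orP[/eqP ->|]; [exists x|exact: coverE].
have far x : x \in E -> r < bowen_dist T n x a.
  by move=> xE; rewrite ltNge; apply/negP => xa; apply: farE; exists x.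
exists (a :: E); split.
- by move=> y; rewrite !inE => /orP[->//|/sE ->]; rewrite orbT.
- move=> x y /=; rewrite !inE => /orP[/eqP ->|xE] /orP[/eqP ->|yE] xy //.
  + by rewrite bowen_distC; exact: far.
  + exact: far.
  + exact: sepE.
- move=> y; rewrite inE => /orP[/eqP ->|ys].
    exists a; first by rewrite inE eqxx.
    by apply: bigmax_le => // i _; rewrite mdistxx.
  by have [x xE xy] := coverE y ys; exists x => //; rewrite inE xE orbT.
Qed.

End bowen.

Section pressure.
Context {R : realType} {X : metricType R} (T : X -> X) (f : X -> R).
Implicit Types (x y z w : X) (r g : R) (n : nat) (A K : set X).

Lemma cover_term_ge0 n K A : (0 <= cover_term T f n K A)%E.
Proof.
rewrite /cover_term; case: pselect => // AK.
have [x AKx] : (A `&` K) !=set0 by apply/set0P/eqP.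
apply: le_ereal_sup_tmp; exists (expR (birk T f n x))%:E; first by exists x.
by rewrite lee_fin expR_ge0.
Qed.

Lemma cover_term_ge n K A x : A x -> K x ->
  ((expR (birk T f n x))%:E <= cover_term T f n K A)%E.
Proof.
move=> Ax Kx; rewrite /cover_term; case: pselect => [AK0|AK].
  have AKx : (A `&` K) x by [].
  by rewrite AK0 in AKx.
by apply: ereal_sup_ubound; exists x.
Qed.

Lemma cover_term_le n K A (c : \bar R) : (0 <= c)%E ->
  (forall w, A w -> K w -> ((expR (birk T f n w))%:E <= c)%E) ->
  (cover_term T f n K A <= c)%E.
Proof.
move=> c_ge0 Ac; rewrite /cover_term; case: pselect => // AK.
by apply: ge_ereal_sup => _ [w [Aw Kw] <-]; exact: Ac.
Qed.

Lemma birk_le_add n x w g :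
  (forall i, (i < n)%N -> f (iter i T w) <= f (iter i T x) + g) ->
  birk T f n w <= birk T f n x + n%:R * g.
Proof.
move=> wx; rewrite /birk.
rewrite (le_trans (ler_sum _ (fun (i : 'I_n) _ => wx i (ltn_ord i))))//.
by rewrite big_split /= sumr_const card_ord mulr_natl.
Qed.

Lemma cover_term_bowen_ball_le n K x r g :
  (forall a b, mdist a b < r -> f b <= f a + g) ->
  (cover_term T f n K (bowen_ball T n x r) <=
    (expR (n%:R * g))%:E * (expR (birk T f n x))%:E)%E.
Proof.
move=> fr; apply: cover_term_le.
  by rewrite -EFinM lee_fin mulr_ge0 ?expR_ge0.
move=> w xw _; rewrite -EFinM lee_fin -expRD ler_expR addrC.
by apply: birk_le_add => i lt_in; apply: fr; exact: xw.
Qed.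

Lemma le_pressure_sep n d1 d2 K : d1 <= d2 ->
  (pressure_sep T f n d2 K <= pressure_sep T f n d1 K)%E.
Proof.
move=> d12; apply: ge_ereal_sup => _ [E [Efin [EK Esep]] <-].
apply: ereal_sup_ubound; exists E => //; split; [|split] => // x y Ex Ey xy.
exact: le_lt_trans d12 (Esep x y Ex Ey xy).
Qed.

Lemma pressure_sep_le_cov n d (U : set (set X)) K : 0 < d ->
  (forall A, U A -> forall x y, A x -> A y -> mdist x y < d) ->
  (pressure_sep T f n d K <= pressure_cov T f n U K)%E.
Proof.
move=> d_gt0 Ud.
apply: ge_ereal_sup => _ [E [Efin [EK Esep]] <-].
apply: le_ereal_inf_tmp => _ [V [[Vfin [Vborel Vcover]] VU] <-].
have /choice [h Hh] : forall x, exists A, V A /\ A x.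
  move=> x; have : (\bigcup_(A in V) A) x by rewrite Vcover.
  by case=> A VA Ax; exists A.
have h_inj : set_inj E h.
  move=> x y /set_mem Ex /set_mem Ey hxy; apply: contrapT => xy.
  have := Esep x y Ex Ey xy; apply/negP; rewrite -leNgt; apply: ltW.
  have [_ [g [Ug ->]] hxW] := VU _ (Hh x).1.
  have [Wx Wy] : (h x) x /\ (h x) y by split; [|rewrite hxy]; exact: (Hh _).2.
  apply: bowen_dist_lt => // i lt_in.
  exact: Ud (Ug i lt_in) _ _ (hxW _ Wx i lt_in) (hxW _ Wy i lt_in).
apply: (@le_trans _ _ (\sum_(x \in E) cover_term T f n K (h x))%E).
  apply: lee_fsum => // x Ex.
  by apply: cover_term_ge; [exact: (Hh x).2|exact: EK].
rewrite -fsbig_image//; apply: lee_fsum_nneg_subset => //.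
- exact: finite_image.
- by move=> A /set_mem [x Ex <-]; apply/mem_set; exact: (Hh x).1.
- by move=> A _; exact: cover_term_ge0.
Qed.

Section compact.
Hypotheses (compactX : compact [set: X]) (contT : continuous T).

Lemma exists_separated_cover n r K : 0 < r -> exists E : set X,
  [/\ finite_set E, E `<=` K, separated_set T n r E &
      K `<=` \bigcup_(x in E) bowen_ball T n x (2 * r)].
Proof.
(* E is a maximal r-separated subset of a finite set of points of K, one in
   each ball of a finite cover of X by Bowen balls of radius r/2. *)
move=> r_gt0; pose O z := bowen_ball T n z (r / 2).
have r2_gt0 : 0 < r / 2 by rewrite divr_gt0.
have [Z ZX] := compact_finite_subcover compactX O
  (fun z => bowen_ball_open T n z (r / 2) contT)
  (fun z => bowen_ballxx T n z _ r2_gt0).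
have /choice [p Hp] : forall z, exists y, (O z `&` K) !=set0 -> (O z `&` K) y.
  move=> z; have [[y zKy]|nzK] := pselect ((O z `&` K) !=set0).
    by exists y.
  by exists z => zK; case: nzK.
pose s := [seq p z | z <- Z & `[< (O z `&` K) !=set0 >]].
have [E [sE Esep Es]] := separated_subseq T n r s (ltW r_gt0).
exists [set` E]; split; [exact: finite_seq| |exact: Esep|].
  move=> y /sE /mapP [z]; rewrite mem_filter => /andP [/asboolP zK _] ->.
  exact: (Hp z zK).2.
move=> k Kk; have [z zZ zk] := ZX k.
have zK : (O z `&` K) !=set0 by exists k.
have [|x xE xp] := Es (p z).
  by apply/mapP; exists z => //; rewrite mem_filter zZ andbT; exact/asboolP.
exists x => // i lt_in; have [zp _] := Hp z zK.
have := le_bowen_dist T _ x (p z) _ lt_in.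
have := zp i lt_in; have := zk i lt_in.
have := metric_triangle (iter i T x) (iter i T (p z)) (iter i T k).
have := metric_triangle (iter i T (p z)) (iter i T z) (iter i T k).
have := metric_sym (iter i T (p z)) (iter i T z); lra.
Qed.

Lemma pressure_cov_le_bowen_cover n (U : set (set X)) K (E : set X) r :
  0 < r -> finite_set E ->
  (forall x, exists2 A, U A & [set y | mdist x y < r] `<=` A) ->
  K `<=` \bigcup_(x in E) bowen_ball T n x r ->
  (pressure_cov T f n U K <=
    \sum_(x \in E) cover_term T f n K (bowen_ball T n x r))%E.
Proof.
(* Completed to a cover of X by the parts outside B of finitely many Bowen
   balls; these parts miss K and hence do not contribute to the sum. *)
move=> r_gt0 Efin Ur KE; set B := \bigcup_(x in E) bowen_ball T n x r.
have [Z ZX] := compact_finite_subcover compactX (fun z => bowen_ball T n z r)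
  (fun z => bowen_ball_open T n z r contT)
  (fun z => bowen_ballxx T n z _ r_gt0).
pose Vb := [set bowen_ball T n x r | x in E].
pose Vr := [set bowen_ball T n z r `\` B | z in [set` Z]].
have Vfin : finite_set (Vb `|` Vr).
  by rewrite finite_setU; split; apply: finite_image => //; exact: finite_fset.
have Vborel A : (Vb `|` Vr) A -> borel_set A.
  move=> [[x _ <-]|[z _ <-]].
    exact: borel_open (bowen_ball_open _ _ _ _ contT).
  apply: borel_setD; apply: borel_open; first exact: bowen_ball_open.
  by apply: bigcup_open => x _; exact: bowen_ball_open.
have Vcover : \bigcup_(A in Vb `|` Vr) A = setT.
  apply/seteqP; split => // w _; have [z zZ zw] := ZX w.
  have [[x Ex xw]|Bw] := pselect (B w).
    by exists (bowen_ball T n x r) => //; left; exists x.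
  by exists (bowen_ball T n z r `\` B) => //; right; exists z.
have VU : refines (Vb `|` Vr) (join_cover T U n).
  move=> A [[x _ <-]|[z _ <-]]; first exact: bowen_ball_sub_join.
  have [W JW zW] := bowen_ball_sub_join T U n z r Ur.
  by exists W => // w [/zW].
have Vr0 : (Vb `|` Vr) `\` Vb `<=` cover_term T f n K @^-1` [set 0%E].
  move=> _ [[//|[z _ <-]] _]; rewrite /cover_term /=; case: pselect => // + .
  by case; apply/seteqP; split => // w [[_ nBw] /KE].
apply: (@le_trans _ _ (\sum_(A \in Vb `|` Vr) cover_term T f n K A)%E).
  by apply: ereal_inf_lbound; exists (Vb `|` Vr).
rewrite -(fsbig_widen _ _ _ (@subsetUl _ Vb Vr) Vr0).
exact: fsume_image_le (cover_term_ge0 n K).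
Qed.

Lemma pressure_cov_le_sep n (U : set (set X)) K r g : 0 < r ->
  (forall x, exists2 A, U A & [set y | mdist x y < 2 * r] `<=` A) ->
  (forall a b, mdist a b < 2 * r -> f b <= f a + g) ->
  (pressure_cov T f n U K <= (expR (n%:R * g))%:E * pressure_sep T f n r K)%E.
Proof.
move=> r_gt0 Ur fr.
have [E [Efin EK Esep KE]] := exists_separated_cover n r K r_gt0.
have r2_gt0 : 0 < 2 * r by rewrite mulr_gt0.
apply: le_trans (pressure_cov_le_bowen_cover _ _ _ _ _ r2_gt0 Efin Ur KE) _.
apply: le_trans (lee_fsum Efin
  (fun x _ => cover_term_bowen_ball_le n K x _ _ fr)) _.
rewrite -ge0_mule_fsumr => [|x]; last by rewrite lee_fin expR_ge0.
apply: lee_wpmul2l; first by rewrite lee_fin expR_ge0.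
by apply: ereal_sup_ubound; exists E.
Qed.

End compact.

End pressure.

Section elog_limsup.
Context {R : realType}.
Local Open Scope ereal_scope.
Implicit Types (x y : \bar R) (u v : (\bar R)^nat).

Lemma le_elog x y : x <= y -> elog x <= elog y.
Proof.
move: x y => [a| |] [b| |] //= ab; rewrite ?leNye//; last first.
  by case: ifP; rewrite ?leey.
rewrite lee_fin in ab; have [a_gt0|] := ltP 0%R a; last by rewrite leNye.
by rewrite (lt_le_trans a_gt0 ab) lee_fin ler_ln// posrE (lt_le_trans a_gt0).
Qed.

Lemma elogM_expR (c : R) y : elog ((expR c)%:E * y) = c%:E + elog y.
Proof.
case: y => [s| |] /=; last 2 first.
- by rewrite gt0_muley ?lte_fin ?expR_gt0.
- by rewrite gt0_muleNy ?lte_fin ?expR_gt0.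
rewrite pmulr_rgt0 ?expR_gt0//; case: ifP => // s_gt0.
by rewrite lnM ?posrE ?expR_gt0// expRK EFinD.
Qed.

Lemma mule_invn_shift n (a : R) y : (0 < n)%N ->
  (n%:R^-1)%:E * ((n%:R * a)%:E + y) = a%:E + (n%:R^-1)%:E * y.
Proof.
move=> n_gt0; have n_gt0' : (0 < n%:R :> R)%R by rewrite ltr0n.
case: y => [s| |] /=; last 2 first.
- by rewrite gt0_muley ?lte_fin ?invr_gt0.
- by rewrite gt0_muleNy ?lte_fin ?invr_gt0.
by rewrite -EFinD -!EFinM -EFinD mulrDr mulrA mulVf ?mul1r// gt_eqF.
Qed.

Lemma le_mul_invn_elog n x y : x <= y ->
  (n%:R^-1)%:E * elog x <= (n%:R^-1)%:E * elog y.
Proof.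
by move=> xy; apply: lee_wpmul2l; [rewrite lee_fin invr_ge0|exact: le_elog].
Qed.

Lemma le_limn_esup_near u v : (\forall n \near \oo, u n <= v n) ->
  limn_esup u <= limn_esup v.
Proof.
move=> uv; apply: le_ereal_inf_tmp => _ [V Vnear <-].
apply: ge_ereal_inf; exists (ereal_sup (u @` (V `&` [set n | u n <= v n]))).
  by exists (V `&` [set n | u n <= v n]) => //; exact: filterI.
apply: ge_ereal_sup => _ [m [Vm uvm] <-].
by apply: le_trans uvm _; apply: ereal_sup_ubound; exists m.
Qed.

Lemma limn_esup_shift (a : R) u :
  limn_esup (fun n => a%:E + u n) = a%:E + limn_esup u.
Proof.
have esupE (w : (\bar R)^nat) : limn_esup w = - limn_einf (\- w).
  rewrite /limn_einf oppeK; congr limn_esup.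
  by apply/funext => n /=; rewrite oppeK.
rewrite esupE (esupE u).
rewrite [X in limn_einf X](_ : _ = fun n => (- a)%:E + (\- u) n).
  by rewrite limn_einf_shift// oppeD// EFinN oppeK.
by apply/funext => n /=; rewrite oppeD.
Qed.

End elog_limsup.

Lemma cvge_near_sup {R : realType} {T : Type} (F : set_system T) {FF : Filter F}
    (L : T -> \bar R) (S : \bar R) :
  (\forall t \near F, (L t <= S)%E) ->
  (forall a : R, (a%:E < S)%E -> \forall t \near F, (a%:E < L t)%E) ->
  L @ F --> S.
Proof.
move=> LS SL; case: S LS SL => [s| |] LS SL.
- apply/fine_cvgP; split.
    have := SL (s - 1)%R; rewrite lte_fin gtrBl ltr01 => /(_ isT).
    by apply: filterS2 LS => t; case: (L t).
  apply/cvgrPdist_lt => e e_gt0.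
  have := SL (s - e)%R; rewrite lte_fin gtrBl e_gt0 => /(_ isT).
  apply: filterS2 LS => t /=; case: (L t) => //= l; rewrite !lte_fin !lee_fin.
  by move=> ls sl; rewrite ltr_norml; apply/andP; split; lra.
- by apply/cvgeyPge => A; apply: filterS (SL A (ltey _)) => t /ltW.
- apply/cvgeNyPle => A; apply: filterS LS => t; rewrite leeNy_eq => /eqP ->.
  exact: leNye.
Qed.

Definition sep_growth {R : realType} {X : metricType R} (T : X -> X)
    (f : X -> R) (K : nat -> set X) (delta : R) : \bar R :=
  limn_esup (fun n => ((n%:R)^-1%:E * elog (pressure_sep T f n delta (K n)))%E).

Definition cov_growth {R : realType} {X : metricType R} (T : X -> X)
    (f : X -> R) (K : nat -> set X) (U : set (set X)) : \bar R :=
  limn_esup (fun n => ((n%:R)^-1%:E * elog (pressure_cov T f n U (K n)))%E).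

Section growth.
Context {R : realType} {X : metricType R} (T : X -> X) (f : X -> R).
Context (K : nat -> set X).
Hypothesis compactX : compact [set: X].
Local Open Scope ereal_scope.

Lemma sep_growth_le_sup_cov d : (0 < d)%R ->
  sep_growth T f K d <=
    ereal_sup [set cov_growth T f K U | U in [set U | open_cover U]].
Proof.
move=> d_gt0; have [U Uopen Ud] := small_open_cover compactX _ d_gt0.
apply: (@le_trans _ _ (cov_growth T f K U)).
  apply: le_limn_esup_near; apply: nearW => n; apply: le_mul_invn_elog.
  exact: pressure_sep_le_cov.
by apply: ereal_sup_ubound; exists U.
Qed.

Hypotheses (contT : continuous T) (contf : continuous f).

Lemma cov_growth_le_sep_growth U e : open_cover U -> (0 < e)%R ->
  \forall d \near 0^'+, cov_growth T f K U <= e%:E + sep_growth T f K d.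
Proof.
move=> [_ [Uopen Ucover]] e_gt0.
have [r1 r1_gt0 Ur1] := lebesgue_number compactX _ Uopen Ucover.
have [eta eta_gt0 feta] := compact_unif_continuous compactX _ contf _ e_gt0.
pose r := (Num.min r1 eta / 2)%R.
have r_gt0 : (0 < r)%R by rewrite divr_gt0// lt_min r1_gt0.
have [r_r1 r_eta] : (2 * r <= r1 /\ 2 * r <= eta)%R.
  by rewrite /r mulrC divfK ?pnatr_eq0// ge_min lexx ge_min lexx orbT.
have Ur (x : X) : exists2 A, U A & [set y | (mdist x y < 2 * r)%R] `<=` A.
  have [A UA xA] := Ur1 x; exists A => // y xy; apply: xA.
  exact: lt_le_trans xy r_r1.
have fr (a b : X) : (mdist a b < 2 * r -> f b <= f a + e)%R.
  move=> ab; have /feta := lt_le_trans ab r_eta; rewrite distrC => fab.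
  by have := ler_norm (f b - f a); lra.
near=> d.
apply: (@le_trans _ _ (limn_esup (fun n =>
    e%:E + (n%:R^-1)%:E * elog (pressure_sep T f n r (K n))))).
  apply: le_limn_esup_near; near=> n.
  rewrite -mule_invn_shift -?elogM_expR; last by near: n; exact: nbhs_infty_gt.
  by apply: le_mul_invn_elog; exact: pressure_cov_le_sep.
rewrite limn_esup_shift leeD2l // /sep_growth.
apply: le_limn_esup_near; apply: nearW => n.
apply/le_mul_invn_elog/le_pressure_sep.
by near: d; exact: nbhs_right_le.
Unshelve. all: by end_near. Qed.

Lemma lt_sep_growth_near (a : R) :
  a%:E < ereal_sup [set cov_growth T f K U | U in [set U | open_cover U]] ->
  \forall d \near 0^'+, a%:E < sep_growth T f K d.
Proof.
move=> aS; have [b ab bS] : exists2 b : R, (a < b)%R &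
    b%:E < ereal_sup [set cov_growth T f K U | U in [set U | open_cover U]].
  move: aS; case: ereal_sup => [s| |] // aS.
    by exists ((a + s) / 2)%R; rewrite ?lte_fin in aS *; lra.
  by exists (a + 1)%R; rewrite ?ltey//; lra.
have [_ [U Uopen <-] bU] := ereal_sup_gt bS.
have ba_gt0 : (0 < b - a)%R by rewrite subr_gt0.
have := cov_growth_le_sep_growth _ _ Uopen ba_gt0; apply: filterS => d.
move/(lt_le_trans bU); case: sep_growth => [l| |] //=; rewrite ?ltey// !lte_fin.
lra.
Qed.

End growth.

Theorem lemma3p1 (R : realType) (X : metricType R) (T : X -> X) (f : X -> R)
    (K : nat -> set X) :
  compact [set: X] ->
  homeomorphism T ->
  continuous f ->
  (forall n, (0 < n)%N -> K n !=set0 /\ closed (K n)) ->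
  (fun delta : R =>
     limn_esup (fun n => ((n%:R)^-1%:E * elog (pressure_sep T f n delta (K n)))%E))
    x @[x --> 0^'+] -->
  ereal_sup [set limn_esup
                 (fun n => ((n%:R)^-1%:E * elog (pressure_cov T f n U (K n)))%E)
            | U in [set U | open_cover U]].
Proof.
move=> compactX [contT _] contf _; apply: cvge_near_sup; last first.
  by move=> a; exact: (lt_sep_growth_near T f K compactX contT contf).
near=> d; apply: (sep_growth_le_sup_cov T f K compactX).
by near: d; exact: nbhs_right_gt.
Unshelve. all: by end_near. Qed.
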